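(* Let $N\geq 2$, $\kappa=0$, and let $\mu_L>0>\mu_R$ be fixed (independent of $\beta$). Let $\rho_\beta$ be the unique stationary distribution of the boundary driven exclusion process on $\{0,1\}^N$ at inverse temperature $\beta$. Then for $x\in\{0,1\}^N$, $$\rho_\beta(x)\asymp 1 \quad\text{if and only if}\quad x(1)=1 \text{ and } x(N)=0.$$
   Context: Configurations are $x\in\{0,1\}^N$; $x(i)=1$ means site $i$ is occupied. For $i\neq j$, $x^{i,j}$ is $x$ with occupations of sites $i,j$ exchanged; for $i\in\{1,N\}$, $x^i$ is $x$ with the occupation of site $i$ flipped. The boundary driven exclusion process (the boundary driven Kawasaki process with zero coupling) is the continuous-time Markov jump process whose only transitions are: for $|i-j|=1$ with $x(i)\neq x(j)$, $x\to x^{i,j}$ at rate $1$; and for $i\in\{1,N\}$, $x\to x^i$ at rate $\exp[\tfrac{\beta\mu_i}{2}(1-2x(i))]$, with $\mu_1=\mu_L$, $\mu_N=\mu_R$. It has a unique stationary distribution $\rho_\beta$. Notation: $f(\beta)\asymp 1$ means $\lim_{\beta\to\infty}\frac1\beta\log f(\beta)=0$. *)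

From HB Require Import structures.
From mathcomp Require Import all_boot all_order all_algebra.
From mathcomp Require Import all_classical all_reals all_analysis.
Set Implicit Arguments. Unset Strict Implicit. Unset Printing Implicit Defensive.
Import Order.TTheory GRing.Theory Num.Theory.
Import numFieldNormedType.Exports.
Local Open Scope classical_set_scope.
Local Open Scope ring_scope.

(* Configurations x in {0,1}^N: sites 1..N of the paper are indices 0..N-1. *)
Definition config (N : nat) := {ffun 'I_N -> bool}.

Definition occ N (x : config N) (i : nat) : bool :=
  if (insub i : option 'I_N) is Some k then x k else false.

Definition swap N (x : config N) (i j : nat) : config N :=
  [ffun k : 'I_N => if val k == i then occ x j
                    else if val k == j then occ x i else x k].

Definition flip N (x : config N) (i : nat) : config N :=
  [ffun k : 'I_N => if val k == i then ~~ x k else x k].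

Definition rate (R : realType) N (muL muR beta : R) (x y : config N) : R :=
  \sum_(i < N.-1)
     (if (occ x i != occ x i.+1) && (y == swap x i i.+1) then 1 else 0)
  + (if y == flip x 0 then expR (beta * muL / 2 * (1 - 2 * (occ x 0)%:R)) else 0)
  + (if y == flip x N.-1
     then expR (beta * muR / 2 * (1 - 2 * (occ x N.-1)%:R)) else 0).

Definition stationary (R : realType) N (muL muR beta : R) (rho : config N -> R) : Prop :=
  [/\ forall x, 0 <= rho x,
      \sum_x rho x = 1 &
      forall y, \sum_(x | x != y) rho x * rate muL muR beta x y
                = rho y * \sum_(z | z != y) rate muL muR beta y z].

(* f(beta) ≍ 1 :  lim_{beta -> oo} (1/beta) log f(beta) = 0 *)
Definition asymp1 (R : realType) (f : R -> R) : Prop :=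
  (ln (f b) / b) @[b --> +oo] --> (0 : R).

(* Call x dominant when x(1) = 1 and x(N) = 0.  The set {x(1) = 0} is left
   at rate at least e^{beta muL / 2} (refilling site 1) and entered at rate at
   most 2, so flux balance across this cut bounds its stationary mass by
   2 e^{-beta muL / 2}; symmetrically at site N.  Hence dominant configurations
   carry mass at least 1/2 for large beta.  They are all connected through the
   configuration with a single particle at site 1 by interior exchanges and by
   particles entering at site 2 or leaving from site N-1, and along each such
   move the stationary measure drops by at most a beta-independent factor,
   because the target and the intermediate configurations are left at total
   rate comparable to the rate of the move.  So each dominant configuration has
   mass bounded below, while the others are positive but exponentially small. *)

From HB Require Import structures.
From mathcomp Require Import all_boot all_order all_algebra.
From mathcomp Require Import all_classical all_reals all_analysis.
From mathcomp Require Import zify ring lra.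
From Stdlib Require Import Relation_Operators.
Import Order.TTheory GRing.Theory Num.Theory.
Local Open Scope ring_scope.

#[local] Arguments rt_trans {A R x y z}.

Lemma ler_sum_pred {R : numDomainType} {T : finType} (P : pred T) (F : T -> R) :
  (forall x, 0 <= F x) -> \sum_(x | P x) F x <= \sum_x F x.
Proof. by move=> F0; rewrite [leRHS](bigID P) /= lerDl sumr_ge0. Qed.

Lemma if_ge0 {R : numDomainType} (b : bool) (v : R) : 0 <= v -> 0 <= if b then v else 0.
Proof. by case: b. Qed.

Lemma sum_if_eq {R : nmodType} {T : finType} (t : T) (v : R) :
  \sum_x (if x == t then v else 0) = v.
Proof. by rewrite -big_mkcond big_pred1_eq. Qed.

Definition is_stationary {R : numDomainType} {T : finType} (q : T -> T -> R)
    (rho : T -> R) : Prop :=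
  [/\ forall x, 0 <= rho x, \sum_x rho x = 1 &
      forall y, \sum_(x | x != y) rho x * q x y = rho y * \sum_(z | z != y) q y z].

Section StationaryMeasure.
Context {R : realDomainType} {T : finType} {q : T -> T -> R} {rho : T -> R}.
Hypotheses (q_ge0 : forall x y, 0 <= q x y) (hs : is_stationary q rho).

Let rho_ge0 x : 0 <= rho x. Proof. by case: hs. Qed.
Let rho_sum1 : \sum_x rho x = 1. Proof. by case: hs. Qed.
Let rho_balance y :
  \sum_(x | x != y) rho x * q x y = rho y * \sum_(z | z != y) q y z.
Proof. by case: hs. Qed.

Lemma rho_le_mass (P : pred T) x : P x -> rho x <= \sum_(y | P y) rho y.
Proof.
move=> Px; rewrite (bigD1 x) //= lerDl.
by apply: sumr_ge0 => y _; apply: rho_ge0.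
Qed.

Lemma rho_le1 x : rho x <= 1.
Proof. by rewrite -rho_sum1; apply: (rho_le_mass predT). Qed.

Lemma rho_rate_le {x y B} : x != y -> \sum_(z | z != y) q y z <= B ->
  rho x * q x y <= rho y * B.
Proof.
move=> xy hB; apply: le_trans (_ : rho y * \sum_(z | z != y) q y z <= _).
  rewrite -rho_balance (bigD1 x) //= lerDl.
  by apply: sumr_ge0 => z _; apply: mulr_ge0.
exact: ler_wpM2l.
Qed.

Lemma rho_le_step {x y B} : x != y -> 1 <= q x y -> \sum_(z | z != y) q y z <= B ->
  rho x <= rho y * B.
Proof.
move=> xy qxy hB; apply: le_trans (rho_rate_le xy hB).
by rewrite -{1}[rho x]mulr1 ler_wpM2l.
Qed.

Lemma rho_le_two_steps x x' y g B : 0 <= B -> x != x' -> x' != y ->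
  1 <= q x x' -> g <= q x' y ->
  \sum_(z | z != x') q x' z <= B * g -> \sum_(z | z != y) q y z <= B ->
  rho x <= rho y * B ^+ 2.
Proof.
move=> B0 xx' x'y qxx' qx'y hB' hB.
have h2 : rho x' * g <= rho y * B.
  by apply: le_trans (rho_rate_le x'y hB); rewrite ler_wpM2l.
apply: le_trans (rho_le_step xx' qxx' hB') _.
by rewrite expr2 mulrCA [rho y * _]mulrCA ler_wpM2l.
Qed.

Lemma rho_gt0_rate x y : x != y -> 0 < q x y -> 0 < rho x -> 0 < rho y.
Proof.
move=> xy qxy rx; rewrite lt_def rho_ge0 andbT; apply/eqP => ry0.
have := rho_rate_le xy (lexx _); rewrite ry0 mul0r.
by apply/negP; rewrite -ltNge mulr_gt0.
Qed.

Lemma cut_balance (S : pred T) :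
  \sum_(y | S y) \sum_(x | ~~ S x) rho x * q x y =
  \sum_(y | S y) \sum_(z | ~~ S z) rho y * q y z.
Proof.
have split_out : forall y, S y -> \sum_(x | x != y) rho x * q x y =
    \sum_(x | S x && (x != y)) rho x * q x y + \sum_(x | ~~ S x) rho x * q x y.
  move=> y Sy; rewrite (bigID S) /=; congr (_ + _); apply: eq_bigl => x.
    by rewrite andbC.
  by case: eqVneq => // ->; rewrite Sy.
have split_in : forall y, S y -> rho y * \sum_(z | z != y) q y z =
    \sum_(z | S z && (z != y)) rho y * q y z + \sum_(z | ~~ S z) rho y * q y z.
  move=> y Sy; rewrite mulr_sumr (bigID S) /=; congr (_ + _); apply: eq_bigl => z.
    by rewrite andbC.
  by case: eqVneq => // ->; rewrite Sy.
have inner : \sum_(y | S y) \sum_(x | S x && (x != y)) rho x * q x y =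
    \sum_(y | S y) \sum_(z | S z && (z != y)) rho y * q y z.
  rewrite (exchange_big_dep S) /=; last by move=> y x _ /andP[].
  apply: eq_bigr => x Sx; apply: eq_bigl => y.
  by rewrite eq_sym; case: (S y); rewrite ?andbT ?Sx.
have : \sum_(y | S y) \sum_(x | x != y) rho x * q x y =
    \sum_(y | S y) rho y * \sum_(z | z != y) q y z.
  by apply: eq_bigr => y _; apply: rho_balance.
rewrite (eq_bigr _ split_out) (eq_bigr _ split_in) !big_split /= inner.
exact: addrI.
Qed.

Lemma cut_mass_le (S : pred T) (c g : R) : 0 <= c ->
  (forall x, ~~ S x -> \sum_(y | S y) q x y <= c) ->
  (forall y, S y -> g <= \sum_(z | ~~ S z) q y z) ->
  g * \sum_(y | S y) rho y <= c.
Proof.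
move=> c0 hin hout.
have influx : \sum_(y | S y) \sum_(x | ~~ S x) rho x * q x y <= c.
  rewrite exchange_big /=; apply: le_trans (_ : \sum_(x | ~~ S x) rho x * c <= _).
    by apply: ler_sum => x Sx; rewrite -mulr_sumr ler_wpM2l ?hin.
  by rewrite -mulr_suml -[leRHS]mul1r -rho_sum1 ler_wpM2r // ler_sum_pred.
rewrite cut_balance in influx; apply: le_trans influx.
rewrite mulr_sumr; apply: ler_sum => y Sy.
by rewrite -mulr_sumr mulrC ler_wpM2l ?hout.
Qed.

End StationaryMeasure.

Section Configurations.
Context {n : nat}.
Local Notation N := n.+2.
Implicit Types x y : config N.

Lemma occ_ord x {j} (hj : (j < N)%N) : occ x j = x (Ordinal hj).
Proof.
rewrite /occ; case: insubP => [k _ ek|]; last by rewrite hj.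
by congr (x _); apply: val_inj.
Qed.

Lemma occ_oob x j : (N <= j)%N -> occ x j = false.
Proof.
move=> hj; rewrite /occ; case: insubP => [k hk _|//].
by move: hk; rewrite ltnNge hj.
Qed.

Lemma config_ext x y : (forall i, (i < N)%N -> occ x i = occ y i) -> x = y.
Proof.
move=> H; apply/ffunP => k; have := H _ (ltn_ord k).
rewrite !(occ_ord _ (ltn_ord k)).
by have -> : Ordinal (ltn_ord k) = k by apply: val_inj.
Qed.

Lemma occ_flip x i j : (i < N)%N ->
  occ (flip x i) j = if j == i then ~~ occ x j else occ x j.
Proof.
move=> hi; case: (ltnP j N) => hj; first by rewrite !(occ_ord _ hj) ffunE.
by rewrite !occ_oob //; case: eqP => // ji; move: hj; rewrite ji leqNgt hi.
Qed.

Lemma occ_swap x i j k : (i < N)%N -> (j < N)%N ->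
  occ (swap x i j) k =
  if k == i then occ x j else if k == j then occ x i else occ x k.
Proof.
move=> hi hj; case: (ltnP k N) => hk.
  by rewrite !(occ_ord _ hk) ffunE /= -!(occ_ord _ hk).
rewrite occ_oob //; case: (eqVneq k i) => [|_]; first lia.
by case: (eqVneq k j) => [|_]; [lia | rewrite occ_oob].
Qed.

Lemma occ_flip_same x i : (i < N)%N -> occ (flip x i) i = ~~ occ x i.
Proof. by move=> hi; rewrite occ_flip // eqxx. Qed.

Lemma occ_flip_other x i k : (i < N)%N -> k != i -> occ (flip x i) k = occ x k.
Proof. by move=> hi /negPf ki; rewrite occ_flip // ki. Qed.

Lemma occ_swapl x i j : (i < N)%N -> (j < N)%N -> occ (swap x i j) i = occ x j.
Proof. by move=> hi hj; rewrite occ_swap // eqxx. Qed.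

Lemma occ_swapr x i j : (i < N)%N -> (j < N)%N -> occ (swap x i j) j = occ x i.
Proof. by move=> hi hj; rewrite occ_swap // eqxx; case: eqP => [->|]. Qed.

Lemma occ_swap_other x i j k : (i < N)%N -> (j < N)%N -> k != i -> k != j ->
  occ (swap x i j) k = occ x k.
Proof. by move=> hi hj /negPf ki /negPf kj; rewrite occ_swap // ki kj. Qed.

Lemma flip_swapr x i j : (i < N)%N -> (j < N)%N -> occ x i != occ x j ->
  flip (swap x i j) j = flip x i.
Proof.
move=> hi hj ne; have ij : i != j by apply: contraNneq ne => ->.
have xj : occ x j = ~~ occ x i by move: ne; case: (occ x i); case: (occ x j).
apply: config_ext => k hk; rewrite !occ_flip // !occ_swap //.
case: (eqVneq k i) => [->|ki]; first by rewrite (negPf ij).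
by case: (eqVneq k j) => [->|//]; rewrite xj.
Qed.

Lemma flip_swapl x i j : (i < N)%N -> (j < N)%N -> occ x i != occ x j ->
  flip (swap x i j) i = flip x j.
Proof.
move=> hi hj ne; have ij : i != j by apply: contraNneq ne => ->.
have xj : occ x j = ~~ occ x i by move: ne; case: (occ x i); case: (occ x j).
apply: config_ext => k hk; rewrite !occ_flip // !occ_swap //.
case: (eqVneq k i) => [->|ki]; first by rewrite (negPf ij) xj negbK.
by case: (eqVneq k j) => [->|//]; rewrite xj negbK.
Qed.

Lemma swap_flip x i j : (i < N)%N -> (j < N)%N -> occ x i = occ x j ->
  swap (flip x i) i j = flip x j.
Proof.
move=> hi hj e; apply: config_ext => k hk; rewrite !occ_swap // !occ_flip //.
case: (eqVneq k i) => [->|ki]; first by case: (eqVneq j i) => [->|]; rewrite ?e.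
by case: (eqVneq k j) => [->|//]; rewrite eqxx e.
Qed.

Lemma flipK x i : (i < N)%N -> flip (flip x i) i = x.
Proof.
move=> hi; apply: config_ext => k hk; rewrite !occ_flip //.
by case: eqP => // ->; rewrite negbK.
Qed.

Lemma neq_flip x i : (i < N)%N -> x != flip x i.
Proof.
move=> hi; apply/eqP => /(congr1 (fun u => occ u i)).
by rewrite occ_flip // eqxx; case: (occ x i).
Qed.

Lemma swap_id x i j : (i < N)%N -> (j < N)%N -> occ x i = occ x j -> swap x i j = x.
Proof.
move=> hi hj e; apply: config_ext => k hk; rewrite occ_swap //.
by case: (eqVneq k i) => [->|_]; [rewrite e | case: (eqVneq k j) => [->|]].
Qed.

Lemma neq_swap x i j : (i < N)%N -> (j < N)%N -> occ x i != occ x j -> x != swap x i j.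
Proof.
move=> hi hj ne; apply/eqP => /(congr1 (fun u => occ u i)).
by rewrite occ_swap // eqxx => e; move: ne; rewrite e eqxx.
Qed.

End Configurations.

Section Reachability.
Context {n : nat}.
Local Notation N := n.+2.
Implicit Types x y : config N.

Definition dominant x := occ x 0 && ~~ occ x n.+1.

(* Moves between dominant configurations along which the stationary measure
   cannot decay: an exchange between interior sites, a particle entering at
   site [1] and a particle leaving from site [n].  The chain realises the last
   two as the jump [0 -> 1] followed by the refilling of site [0], resp. the
   jump [n -> n.+1] followed by the emptying of site [n.+1]. *)
Inductive step : config N -> config N -> Prop :=
| step_bulk x i : dominant x -> (0 < i)%N -> (i < n)%N -> step x (swap x i i.+1)
| step_enter x : dominant x -> (0 < n)%N -> occ x 1 = false -> step x (flip x 1)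
| step_exit x : dominant x -> (0 < n)%N -> occ x n -> step x (flip x n).

Definition reach := clos_refl_trans (config N) step.

Lemma step_dominant {x y} : step x y -> dominant y.
Proof.
case=> {x y} [x i /andP[x0 xN] i0 iN | x /andP[x0 xN] n0 _ | x /andP[x0 xN] n0 _];
  rewrite /dominant.
- by rewrite !occ_swap_other ?x0 ?xN //; lia.
- by rewrite !occ_flip_other ?x0 ?xN //; lia.
- by rewrite !occ_flip_other ?x0 ?xN //; lia.
Qed.

Lemma reach_dominant {x y} : reach x y -> dominant x -> dominant y.
Proof.
by elim=> {x y} [x y /step_dominant | | x y z _ IHxy _ IHyz /IHxy /IHyz].
Qed.

Definition first_only : config N := [ffun k : 'I_N => val k == 0%N].

Lemma occ_first_only i : occ first_only i = (i == 0%N).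
Proof.
case: (ltnP i N) => hi; first by rewrite (occ_ord _ hi) ffunE.
by rewrite occ_oob //; case: i hi.
Qed.

Lemma dominant_first_only {x} : dominant x ->
  (forall i, (0 < i)%N -> (i <= n)%N -> occ x i = false) -> x = first_only.
Proof.
move=> /andP[x0 xN] empty; apply: config_ext => i hi; rewrite occ_first_only.
case: i hi => [|i] hi; first by rewrite x0.
case: (ltnP i n) => hin; first by rewrite empty.
have -> : i.+1 = n.+1 by lia.
by rewrite (negPf xN).
Qed.

(* The rightmost particle, at site [p], is pushed to the right and out. *)
Lemma reach_exit x p : dominant x -> (0 < p)%N -> (p <= n)%N -> occ x p ->
  (forall i, (p < i)%N -> (i <= n)%N -> occ x i = false) -> reach x (flip x p).
Proof.
move: {2}(n - p)%N (erefl (n - p)%N) => d.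
elim: d x p => [|d IH] x p hd hx p0 pn xp empty.
  have ep : p = n by lia.
  by rewrite ep in p0 xp *; apply/rt_step/step_exit.
have xp1 : occ x p.+1 = false by apply: empty; lia.
have xpp1 : occ x p != occ x p.+1 by rewrite xp xp1.
rewrite -(@flip_swapr _ _ _ p.+1) //; try lia.
have r1 : reach x (swap x p p.+1) by apply/rt_step/step_bulk => //; lia.
apply: (rt_trans r1 (IH _ p.+1 _ (reach_dominant r1 hx) _ _ _ _)); try lia.
  by rewrite occ_swapr //; lia.
move=> i pi iN; rewrite occ_swap_other; try (apply/eqP; lia).
by apply: empty; lia.
Qed.

Lemma reach_to_first_only x : dominant x -> reach x first_only.
Proof.
suff H m y : dominant y -> (forall i, (m < i)%N -> (i <= n)%N -> occ y i = false) ->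
    reach y first_only.
  by move=> hx; apply: (H n) => // i; lia.
elim: m y => [|m IH] y hy empty.
  by rewrite -(dominant_first_only hy empty); apply: rt_refl.
case: (ltnP n m.+1) => [nm | mn].
  by apply: IH => // i mi iN; apply: empty; lia.
case ym : (occ y m.+1); last first.
  apply: IH => // i mi iN; case: (eqVneq i m.+1) => [->//|im].
  by apply: empty; lia.
have r1 : reach y (flip y m.+1) by apply: reach_exit.
apply: (rt_trans r1 (IH _ (reach_dominant r1 hy) _)) => i mi iN.
rewrite occ_flip; last lia.
by case: (eqVneq i m.+1) => [->|im]; [rewrite ym | apply: empty; lia].
Qed.

(* A particle enters at site [1] and is pushed to site [p] through empty sites. *)
Lemma reach_enter x p : dominant x -> (0 < p)%N -> (p <= n)%N ->
  (forall i, (0 < i)%N -> (i <= p)%N -> occ x i = false) -> reach x (flip x p).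
Proof.
elim: p => [//|p IH] hx _ pn empty.
case: (posnP p) => [-> | p0].
  by apply/rt_step/step_enter => //; [lia | apply: empty].
have r1 : reach x (flip x p) by apply: IH => // [|i i0 ip]; [lia | apply: empty; lia].
rewrite -(@swap_flip _ _ p); try lia; last by rewrite !empty //; lia.
apply: (rt_trans r1); apply/rt_step/step_bulk => //.
exact: reach_dominant r1 hx.
Qed.

Lemma reach_from_first_only y : dominant y -> reach first_only y.
Proof.
suff H k z : dominant z ->
    (forall i, (0 < i)%N -> (i + k <= n)%N -> occ z i = false) -> reach first_only z.
  by move=> hy; apply: (H n) => // i; lia.
elim: k z => [|k IH] z hz empty.
  rewrite -(dominant_first_only hz) => [|i i0 iN]; first exact: rt_refl.
  by apply: empty; lia.
case: (posnP (n - k)%N) => [nk | nk].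
  by apply: IH => // i i0 iN; lia.
case zp : (occ z (n - k)%N); last first.
  apply: IH => // i i0 iN; case: (eqVneq i (n - k)%N) => [->//|ink].
  by apply: empty; lia.
set z' := flip z (n - k).
have empty' i : (0 < i)%N -> (i <= n - k)%N -> occ z' i = false.
  move=> i0 iN; rewrite occ_flip; last lia.
  by case: (eqVneq i (n - k)%N) => [->|ink]; [rewrite zp | apply: empty; lia].
have hz' : dominant z'.
  by move: hz; rewrite /dominant !occ_flip_other //; try (apply/eqP; lia); lia.
have r1 : reach first_only z' by apply: IH => // i i0 iN; apply: empty'; lia.
have r2 : reach z' (flip z' (n - k)) by apply: reach_enter => //; lia.
by move: r2; rewrite flipK; [apply: rt_trans r1 | lia].
Qed.

End Reachability.

Section Rates.
Context {R : realType} {n : nat} {muL muR beta : R}.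
Local Notation N := n.+2.
Local Notation rate := (rate muL muR beta).
Implicit Types x y z : config N.

Definition bdry_rate (c : R) (s : bool) : R := expR (c / 2 * (1 - 2 * s%:R)).

Lemma bdry_rate_true c : bdry_rate c true = expR (- (c / 2)).
Proof. by rewrite /bdry_rate /=; congr expR; ring. Qed.

Lemma bdry_rate_false c : bdry_rate c false = expR (c / 2).
Proof. by rewrite /bdry_rate /=; congr expR; ring. Qed.

Lemma bdry_rate_true_le1 c : 0 <= c -> bdry_rate c true <= 1.
Proof. by move=> c0; rewrite bdry_rate_true expR_le1 oppr_le0 divr_ge0. Qed.

Lemma bdry_rate_false_le1 c : c <= 0 -> bdry_rate c false <= 1.
Proof. by move=> c0; rewrite bdry_rate_false expR_le1 pmulr_lle0. Qed.

Definition bulk_rate x y i : R :=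
  if (occ x i != occ x i.+1) && (y == swap x i i.+1) then 1 else 0.

Lemma rateE x y : rate x y = \sum_(i < n.+1) bulk_rate x y i
  + (if y == flip x 0 then bdry_rate (beta * muL) (occ x 0) else 0)
  + (if y == flip x n.+1 then bdry_rate (beta * muR) (occ x n.+1) else 0).
Proof. by []. Qed.

Lemma bulk_rate_le1 x y i : bulk_rate x y i <= if y == swap x i i.+1 then 1 else 0.
Proof. by rewrite /bulk_rate; case: (_ != _); case: (_ == _). Qed.

Lemma bulk_rate_ge0 x y i : 0 <= bulk_rate x y i.
Proof. by rewrite /bulk_rate; case: ifP. Qed.

Lemma rate_ge0 x y : 0 <= rate x y.
Proof.
rewrite rateE !addr_ge0 ?if_ge0 ?expR_ge0 //.
by apply: sumr_ge0 => i _; apply: bulk_rate_ge0.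
Qed.

Lemma rate_swap_ge1 x i : (i < n.+1)%N -> occ x i != occ x i.+1 ->
  1 <= rate x (swap x i i.+1).
Proof.
move=> hi ne; rewrite rateE -addrA.
apply: le_trans (_ : \sum_(j < n.+1) bulk_rate x (swap x i i.+1) j <= _).
  rewrite (bigD1 (Ordinal hi)) //= {1}/bulk_rate ne eqxx lerDl.
  by apply: sumr_ge0 => j _; apply: bulk_rate_ge0.
by rewrite lerDl addr_ge0 ?if_ge0 ?expR_ge0.
Qed.

Lemma rate_flip0_ge x : bdry_rate (beta * muL) (occ x 0) <= rate x (flip x 0).
Proof.
rewrite rateE eqxx -addrA [_ + (_ + _)]addrC -addrA lerDl.
by rewrite addr_ge0 ?if_ge0 ?expR_ge0 ?sumr_ge0 // => i _; apply: bulk_rate_ge0.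
Qed.

Lemma rate_flipN_ge x : bdry_rate (beta * muR) (occ x n.+1) <= rate x (flip x n.+1).
Proof.
rewrite rateE eqxx addrC lerDl.
by rewrite addr_ge0 ?if_ge0 ?expR_ge0 ?sumr_ge0 // => i _; apply: bulk_rate_ge0.
Qed.

Lemma outrate_le y : \sum_(z | z != y) rate y z <=
  n.+1%:R + bdry_rate (beta * muL) (occ y 0) + bdry_rate (beta * muR) (occ y n.+1).
Proof.
apply: le_trans (_ : \sum_z rate y z <= _).
  by rewrite [leRHS](bigD1 y) //= lerDr rate_ge0.
under eq_bigr do rewrite rateE.
rewrite !big_split /= !sum_if_eq !lerD2r exchange_big /=.
apply: le_trans (_ : \sum_(i < n.+1) (1 : R) <= _); last by rewrite sumr_const card_ord.
apply: ler_sum => i _.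
apply: le_trans (_ : \sum_z (if z == swap y i i.+1 then 1 else 0) <= _).
  by apply: ler_sum => z _; apply: bulk_rate_le1.
by rewrite sum_if_eq.
Qed.

Lemma rate_into_empty0 x : occ x 0 ->
  \sum_(y | ~~ occ y 0) rate x y <= 1 + bdry_rate (beta * muL) true.
Proof.
move=> x0; apply: le_trans (_ : \sum_(y | ~~ occ y 0) ((if y == swap x 0 1 then 1 else 0)
    + (if y == flip x 0 then bdry_rate (beta * muL) true else 0)) <= _).
  apply: ler_sum => y y0; rewrite rateE x0.
  have -> : (y == flip x n.+1) = false.
    by apply: contraNF y0 => /eqP ->; rewrite occ_flip_other.
  rewrite addr0 (bigD1 ord0) //= big1 ?addr0 ?lerD ?bulk_rate_le1 // => i i0.
  rewrite /bulk_rate; case: ifP => // /andP[_ /eqP ey]; move: y0.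
  have [i0' iN] : (0 < i)%N /\ (i < n.+1)%N by rewrite lt0n i0 ltn_ord.
  by rewrite ey occ_swap_other ?x0 //; try apply/eqP; lia.
apply: le_trans (ler_sum_pred _ _ _) _; last by rewrite big_split /= !sum_if_eq.
by move=> y; rewrite addr_ge0 ?if_ge0 ?expR_ge0.
Qed.

Lemma rate_into_fullN x : ~~ occ x n.+1 ->
  \sum_(y | occ y n.+1) rate x y <= 1 + bdry_rate (beta * muR) false.
Proof.
move=> /negPf xN; apply: le_trans (_ : \sum_(y | occ y n.+1)
    ((if y == swap x n n.+1 then 1 else 0)
    + (if y == flip x n.+1 then bdry_rate (beta * muR) false else 0)) <= _).
  apply: ler_sum => y yN; rewrite rateE xN.
  have -> : (y == flip x 0) = false.
    by apply: contraTF yN => /eqP ->; rewrite occ_flip_other ?xN.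
  rewrite addr0 (bigD1 ord_max) //= big1 ?addr0 ?lerD ?bulk_rate_le1 // => i iN.
  rewrite /bulk_rate; case: ifP => // /andP[_ /eqP ey]; move: yN.
  have ni : (i < n)%N by move: iN (ltn_ord i); rewrite -val_eqE /=; lia.
  by rewrite ey occ_swap_other ?xN //; try apply/eqP; lia.
apply: le_trans (ler_sum_pred _ _ _) _; last by rewrite big_split /= !sum_if_eq.
by move=> y; rewrite addr_ge0 ?if_ge0 ?expR_ge0.
Qed.

End Rates.

Section StationaryBounds.
Context {R : realType} {n : nat} {muL muR beta : R} {rho : config n.+2 -> R}.
Hypotheses (hL : 0 < muL) (hR : muR < 0) (hb : 0 <= beta)
  (hs : stationary muL muR beta rho).
Local Notation N := n.+2.
Local Notation rate := (rate muL muR beta).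
Implicit Types x y : config N.

Let a := expR (beta * muL / 2).
Let b := expR (- (beta * muR / 2)).
Let K : R := n.+1%:R + 2.

Let rho_ge0 x : 0 <= rho x. Proof. by case: hs. Qed.
Let bL : 0 <= beta * muL. Proof. by rewrite mulr_ge0 // ltW. Qed.
Let bR : beta * muR <= 0. Proof. by rewrite mulr_ge0_le0 // ltW. Qed.
Let a_ge1 : 1 <= a. Proof. by rewrite /a -expR0 ler_expR divr_ge0. Qed.
Let b_ge1 : 1 <= b. Proof. by rewrite /b -expR0 ler_expR oppr_ge0 pmulr_lle0. Qed.
Let K_ge1 : 1 <= K. Proof. by rewrite /K; have := ler0n R n.+1; lra. Qed.

Lemma outrate_dominant {y} : dominant y -> \sum_(z | z != y) rate y z <= K.
Proof.
move=> /andP[y0 /negPf yN]; apply: le_trans (outrate_le y) _.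
have := bdry_rate_true_le1 _ bL; have := bdry_rate_false_le1 _ bR.
by rewrite y0 yN /K; lra.
Qed.

Let K_le_sqr : K <= K ^+ 2.
Proof. by rewrite expr2 ler_peMr // (le_trans ler01). Qed.

Let K0 : 0 <= K. Proof. exact: le_trans ler01 K_ge1. Qed.

Lemma bulk_rho_le x i : dominant x -> (0 < i)%N -> (i < n)%N ->
  rho x <= rho (swap x i i.+1) * K ^+ 2.
Proof.
move=> hx i0 iN; have hy := outrate_dominant (step_dominant (step_bulk _ _ hx i0 iN)).
have [hi hi1 hin] : [/\ (i < N)%N, (i.+1 < N)%N & (i < n.+1)%N].
  by clear -iN; split; lia.
case: (eqVneq (occ x i) (occ x i.+1)) => [e | ne].
  by rewrite swap_id // ler_peMr // exprn_ege1.
apply: le_trans (_ : rho (swap x i i.+1) * K <= _); last exact: ler_wpM2l.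
by apply: (rho_le_step rate_ge0 hs); rewrite ?neq_swap ?rate_swap_ge1.
Qed.

(* The intermediate configuration [swap x 0 1] is left at total rate at most
   [K a], a fraction [1 / K] of which refills site [0]. *)
Lemma enter_rho_le x : dominant x -> (0 < n)%N -> occ x 1 = false ->
  rho x <= rho (flip x 1) * K ^+ 2.
Proof.
move=> hx n0 x1; have hy := outrate_dominant (step_dominant (step_enter _ hx n0 x1)).
move: hx => /andP[x0 /negPf xN]; have ne : occ x 0 != occ x 1 by rewrite x0 x1.
set x' := swap x 0 1.
have x'0 : occ x' 0 = false by rewrite occ_swapl.
have x'N : occ x' n.+1 = false by rewrite occ_swap_other ?xN //; clear -n0; lia.
rewrite -(flip_swapl x 0 1) // -/x' in hy *.
apply: (rho_le_two_steps rate_ge0 hs x x' _ a) => //.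
- by rewrite neq_swap.
- by rewrite neq_flip.
- exact: rate_swap_ge1.
- by rewrite /a -bdry_rate_false -x'0 rate_flip0_ge.
apply: le_trans (outrate_le x') _; rewrite x'0 x'N bdry_rate_false.
have := bdry_rate_false_le1 _ bR; have : n.+1%:R <= n.+1%:R * a by rewrite ler_peMr.
by rewrite /K -/a mulrDl; have := a_ge1; lra.
Qed.

Lemma exit_rho_le x : dominant x -> (0 < n)%N -> occ x n ->
  rho x <= rho (flip x n) * K ^+ 2.
Proof.
move=> hx n0 xn; have hy := outrate_dominant (step_dominant (step_exit _ hx n0 xn)).
move: hx => /andP[x0 /negPf xN]; have ne : occ x n != occ x n.+1 by rewrite xn xN.
set x' := swap x n n.+1.
have x'N : occ x' n.+1 by rewrite occ_swapr.
have x'0 : occ x' 0 by rewrite occ_swap_other ?x0 //; clear -n0; lia.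
rewrite -(flip_swapr x n n.+1) // -/x' in hy *.
apply: (rho_le_two_steps rate_ge0 hs x x' _ b) => //.
- by rewrite neq_swap.
- by rewrite neq_flip.
- exact: rate_swap_ge1.
- by rewrite /b -bdry_rate_true -x'N rate_flipN_ge.
apply: le_trans (outrate_le x') _.
rewrite x'0 x'N [bdry_rate (beta * muR) true]bdry_rate_true.
have := bdry_rate_true_le1 _ bL; have : n.+1%:R <= n.+1%:R * b by rewrite ler_peMr.
by rewrite /K -/b mulrDl; have := b_ge1; lra.
Qed.

Lemma step_rho_le x y : step x y -> rho x <= rho y * K ^+ 2.
Proof.
case=> {x y} [x i | x | x];
  [exact: bulk_rho_le | exact: enter_rho_le | exact: exit_rho_le].
Qed.

Lemma empty_left_mass_le : a * \sum_(y | ~~ occ y 0) rho y <= 2.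
Proof.
apply: (cut_mass_le hs) => // [x | y y0].
  rewrite negbK => x0; apply: le_trans (rate_into_empty0 _ x0) _.
  by have := bdry_rate_true_le1 _ bL; lra.
apply: le_trans (_ : rate y (flip y 0) <= _).
  by rewrite /a -bdry_rate_false -(negbTE y0) rate_flip0_ge.
rewrite (bigD1 (flip y 0)) /=; last by rewrite negbK occ_flip_same.
by rewrite lerDl sumr_ge0 // => z _; apply: rate_ge0.
Qed.

Lemma full_right_mass_le : b * \sum_(y | occ y n.+1) rho y <= 2.
Proof.
apply: (cut_mass_le hs) => // [x | y yN].
  move=> xN; apply: le_trans (rate_into_fullN _ xN) _.
  by have := bdry_rate_false_le1 _ bR; lra.
apply: le_trans (_ : rate y (flip y n.+1) <= _).
  by rewrite /b -bdry_rate_true -yN rate_flipN_ge.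
rewrite (bigD1 (flip y n.+1)) /=; last by rewrite occ_flip_same ?yN.
by rewrite lerDl sumr_ge0 // => z _; apply: rate_ge0.
Qed.

Lemma dominant_mass_ge : 8 <= a -> 8 <= b -> 1 / 2 <= \sum_(y | dominant y) rho y.
Proof.
move=> a8 b8.
have mass_small c (P : pred (config N)) : 8 <= c -> c * \sum_(y | P y) rho y <= 2 ->
    \sum_(y | P y) rho y <= 1 / 4.
  move=> c8 hc; have S0 : 0 <= \sum_(y | P y) rho y by apply: sumr_ge0.
  have := ler_wpM2r S0 c8; lra.
have := mass_small _ _ a8 empty_left_mass_le.
have := mass_small _ _ b8 full_right_mass_le.
have : \sum_y rho y = 1 by case: hs.
rewrite (bigID dominant) /=.
have : \sum_(y | ~~ dominant y) rho y <=
    \sum_(y | ~~ occ y 0) rho y + \sum_(y | occ y n.+1) rho y.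
  rewrite big_mkcond [X in _ <= X + _]big_mkcond [X in _ <= _ + X]big_mkcond.
  rewrite -big_split /=.
  apply: ler_sum => y _; rewrite /dominant; have := rho_ge0 y.
  by case: (occ y 0); case: (occ y n.+1) => /=; lra.
lra.
Qed.

End StationaryBounds.

Section LogAsymptotics.
Context {R : realType}.

Lemma asymp1_bounded (f : R -> R) (m M : R) : 0 < m ->
  (forall b, M <= b -> m <= f b <= 1) -> asymp1 f.
Proof.
move=> m0 hf; have /andP[mfM fM1] := hf _ (lexx M); have m1 := le_trans mfM fM1.
have lnm : 0 <= - ln m by rewrite oppr_ge0 ln_le0.
apply/cvgrPdist_le => e e0.
apply: filterS (nbhs_pinfty_ge (num_real (`|M| + 1 + - ln m / e))) => b hb /=.
have Mb : M <= b by have := ler_norm M; have := divr_ge0 lnm (ltW e0); lra.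
have b0 : 0 < b by have := normr_ge0 M; have := divr_ge0 lnm (ltW e0); lra.
have /andP[mf f1] := hf _ Mb; have f0 : 0 < f b := lt_le_trans m0 mf.
have lnf0 : ln (f b) <= 0 by rewrite ln_le0.
have lnmf : ln m <= ln (f b) by rewrite ler_ln ?posrE.
have lnme : - ln m <= e * b.
  by rewrite mulrC -ler_pdivrMr //; have := normr_ge0 M; lra.
rewrite sub0r normrN ler0_norm ?pmulr_lle0 ?invr_gt0 //.
by rewrite -mulNr ler_pdivrMr //; lra.
Qed.

Lemma not_asymp1_decay (f : R -> R) (k M : R) : 0 < k ->
  (forall b, M <= b -> 0 < f b /\ expR (b * k) * f b <= 2) -> ~ asymp1 f.
Proof.
move=> k0 hf /cvgrPdist_le /(_ (k / 4)) H.
have k4 : 0 < k / 4 by apply: divr_gt0.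
have ln2 : 0 < ln (2 : R) by apply: ln_gt0; lra.
have l0 : 0 <= 4 * ln (2 : R) / k by rewrite divr_ge0 ?mulr_ge0 // ltW.
have [b hbM hb] := pinfty_ex_ge (num_real (`|M| + 1 + 4 * ln 2 / k)) (H k4).
have Mb : M <= b by have := ler_norm M; lra.
have b0 : 0 < b by have := normr_ge0 M; lra.
have [f0 fb] := hf b Mb.
have e1 : ln (f b) + b * k <= ln 2.
  rewrite -[X in _ + X](expRK (b * k)) -lnM ?posrE ?expR_gt0 //.
  by rewrite ler_ln ?posrE ?mulr_gt0 ?expR_gt0 // mulrC.
have e2 : 4 * ln 2 <= b * k by rewrite -ler_pdivrMr //; have := normr_ge0 M; lra.
move: hb; rewrite sub0r normrN ler_norml => /andP[h1 _].
rewrite ler_pdivlMr // in h1.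
have : - (k / 4) * b = - (b * k) / 4 by rewrite mulrC; field.
lra.
Qed.

End LogAsymptotics.

Section Dominance.
Context {R : realType} {n : nat} {muL muR : R}.
Hypotheses (hL : 0 < muL) (hR : muR < 0).
Local Notation N := n.+2.
Implicit Types x y w : config N.

Definition rho_dominated x y : Prop := exists2 C : R, 0 <= C &
  forall beta rho, 0 <= beta -> stationary muL muR beta rho -> rho x <= rho y * C.

Lemma reach_rho_dominated x y : reach x y -> rho_dominated x y.
Proof.
elim=> {x y} [x y st | x | x y z _ [C1 C10 h1] _ [C2 C20 h2]].
- exists ((n.+1%:R + 2) ^+ 2) => [|beta rho hb hs]; first by rewrite exprn_ge0 // addr_ge0.
  exact: (step_rho_le hL hR hb hs _ _ st).
- by exists 1 => // beta rho _ _; rewrite mulr1.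
- exists (C2 * C1) => [|beta rho hb hs]; first exact: mulr_ge0.
  apply: le_trans (h1 _ _ hb hs) _.
  by rewrite mulrA ler_wpM2r // (h2 _ _ hb hs).
Qed.

Lemma sum_rho_dominated (P : pred (config N)) w :
  (forall v, P v -> rho_dominated v w) -> exists2 C : R, 0 <= C &
  forall beta rho, 0 <= beta -> stationary muL muR beta rho ->
    \sum_(v | P v) rho v <= rho w * C.
Proof.
move=> hP; elim: (index_enum _) => [|v s [C C0 hC]].
  by exists 0 => // beta rho _ _; rewrite big_nil mulr0.
case Pv: (P v); last by exists C => // beta rho hb hs; rewrite big_cons Pv (hC _ _ hb hs).
have [Cv Cv0 hv] := hP v Pv.
exists (Cv + C) => [|beta rho hb hs]; first exact: addr_ge0.
by rewrite big_cons Pv mulrDr lerD ?(hv _ _ hb hs) ?(hC _ _ hb hs).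
Qed.

(* From [expR t >= 1 + t], both boundary rates [expR (beta muL / 2)] and
   [expR (- beta muR / 2)] exceed 8 beyond this threshold. *)
Definition beta_min : R := 14 / muL - 14 / muR.

Lemma beta_min_ge0 : 0 <= beta_min.
Proof.
have h1 : 0 <= 14 / muL by rewrite divr_ge0 // ltW.
have h2 : 14 / muR <= 0 by rewrite pmulr_rle0 // invr_le0 ltW.
by rewrite /beta_min; lra.
Qed.

Lemma boundary_rates_ge8 beta : beta_min <= beta ->
  8 <= expR (beta * muL / 2) /\ 8 <= expR (- (beta * muR / 2)).
Proof.
move=> hb.
have h1 : 0 <= 14 / muL by rewrite divr_ge0 // ltW.
have h2 : 14 / muR <= 0 by rewrite pmulr_rle0 // invr_le0 ltW.
have e1 : 14 <= beta * muL by rewrite -ler_pdivrMr //; move: hb; rewrite /beta_min; lra.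
have e2 : 14 <= beta * - muR.
  by rewrite -ler_pdivrMr ?oppr_gt0 // invrN mulrN; move: hb; rewrite /beta_min; lra.
split; apply: le_trans (expR_ge1Dx _); rewrite ?mulrN in e2; lra.
Qed.

Lemma dominant_rho_ge w : dominant w -> exists2 m : R, 0 < m &
  forall beta rho, beta_min <= beta -> stationary muL muR beta rho -> m <= rho w.
Proof.
move=> hw.
have [C C0 hC] : exists2 C : R, 0 <= C & forall beta rho, 0 <= beta ->
    stationary muL muR beta rho -> \sum_(v | dominant v) rho v <= rho w * C.
  apply: sum_rho_dominated => v hv; apply: reach_rho_dominated.
  exact: rt_trans (reach_to_first_only _ hv) (reach_from_first_only _ hw).
exists (1 / (2 * (C + 1))) => [|beta rho hb hs].
  by rewrite divr_gt0 // mulr_gt0 //; lra.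
have hb0 : 0 <= beta := le_trans beta_min_ge0 hb.
have [a8 b8] := boundary_rates_ge8 _ hb.
have mass := le_trans (dominant_mass_ge hL hR hb0 hs a8 b8) (hC _ _ hb0 hs).
have rw0 : 0 <= rho w by case: hs.
have C1 : 0 < 2 * (C + 1) by rewrite mulr_gt0 //; lra.
by rewrite ler_pdivrMr // mulrCA mulrDr mulr1; lra.
Qed.

(* Every configuration is reached from a dominant one by flipping boundary
   sites, which happens at positive rate. *)
Lemma rho_gt0 beta rho x : beta_min <= beta -> stationary muL muR beta rho ->
  0 < rho x.
Proof.
move=> hb hs.
have flip0_gt0 w : 0 < rho w -> 0 < rho (flip w 0).
  move=> hw; apply: (rho_gt0_rate rate_ge0 hs _ _ (neq_flip w 0 isT) _ hw).
  exact: lt_le_trans (expR_gt0 _) (rate_flip0_ge _).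
have flipN_gt0 w : 0 < rho w -> 0 < rho (flip w n.+1).
  move=> hw; apply: (rho_gt0_rate rate_ge0 hs _ _ (neq_flip w n.+1 (ltnSn _)) _ hw).
  exact: lt_le_trans (expR_gt0 _) (rate_flipN_ge _).
have dominant_gt0 w : dominant w -> 0 < rho w.
  by move=> /dominant_rho_ge [m m0 /(_ _ _ hb hs)]; apply: lt_le_trans.
have left_gt0 w : occ w 0 -> 0 < rho w.
  move=> w0; case/boolP: (occ w n.+1) => wN.
    rewrite -(flipK w n.+1) //; apply: flipN_gt0; apply: dominant_gt0.
    by rewrite /dominant occ_flip_same // occ_flip_other // w0 wN.
  by apply: dominant_gt0; rewrite /dominant w0.
case/boolP: (occ x 0) => x0; first exact: left_gt0.
rewrite -(flipK x 0) //; apply: flip0_gt0; apply: left_gt0.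
by rewrite occ_flip_same.
Qed.

Section Family.
Context {rho : R -> config N -> R}.
Hypothesis hrho : forall beta, stationary muL muR beta (rho beta).

Lemma asymp1_dominant x : dominant x -> asymp1 (fun beta => rho beta x).
Proof.
move=> hx; have [m m0 hm] := dominant_rho_ge _ hx.
apply: (asymp1_bounded _ _ beta_min m0) => b hb.
by rewrite (hm _ _ hb (hrho b)) (rho_le1 (hrho b)).
Qed.

Lemma not_asymp1_nondominant x : ~~ dominant x -> ~ asymp1 (fun beta => rho beta x).
Proof.
rewrite /dominant negb_and negbK => /orP[x0 | xN].
  apply: (not_asymp1_decay _ (muL / 2) beta_min); first exact: divr_gt0.
  move=> b hb; split; first exact: rho_gt0 _ _ _ hb (hrho b).
  have hb0 := le_trans beta_min_ge0 hb.
  rewrite mulrA; apply: le_trans _ (empty_left_mass_le hL hb0 (hrho b)).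
  by rewrite ler_wpM2l ?expR_ge0 // (rho_le_mass (hrho b)).
apply: (not_asymp1_decay _ (- muR / 2) beta_min).
  by rewrite divr_gt0 ?oppr_gt0.
move=> b hb; split; first exact: rho_gt0 _ _ _ hb (hrho b).
have hb0 := le_trans beta_min_ge0 hb.
have -> : b * (- muR / 2) = - (b * muR / 2) by rewrite mulrA mulrN mulNr.
apply: le_trans _ (full_right_mass_le hR hb0 (hrho b)).
by rewrite ler_wpM2l ?expR_ge0 // (rho_le_mass (hrho b)).
Qed.

End Family.

End Dominance.

Theorem theorem6p1 (R : realType) (N : nat) (muL muR : R)
  (hN : (2 <= N)%N) (hL : 0 < muL) (hR : muR < 0)
  (rho : R -> config N -> R)
  (hrho : forall beta : R, stationary muL muR beta (rho beta))
  (x : config N) :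
  asymp1 (fun beta => rho beta x) <-> (occ x 0 && ~~ occ x N.-1).
Proof.
case: N hN rho hrho x => [|[|n]] // _ rho hrho x.
split=> [hx | /(asymp1_dominant hL hR hrho)] //.
by apply/negPn/negP => /(not_asymp1_nondominant hL hR hrho); apply.
Qed.
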